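(* Let $M$ be a causal generative model (CGM) with latent domain $\mathcal{Z}=\prod_{k=1}^K\mathcal{Z}_k$. If the latent mapping $g_M$ is injective and $\mathcal{Z}$ is compact (i.e. all intervals $\mathcal{Z}_k$ are closed and bounded), then $M$ is embedded.
   Context: A causal generative model (CGM) $M=\mathbb{G}(\mathcal{Z},\mathbf{S},\mathcal{G})$ consists of: $K$ real-valued latent variables $\bm z=(z_k)$ taking values in $\mathcal{Z}=\prod_{k=1}^K\mathcal{Z}_k$, each $\mathcal{Z}_k$ a closed interval; a directed acyclic graph $\mathcal{G}$; and a set $\mathbf{S}$ of $N+1$ deterministic continuous structural equations assigning $N$ endogenous variables $V_k:=f_k(\mathbf{Pa}_k)$ with values in Euclidean spaces $\mathcal{V}^k$ (parents $\mathbf{Pa}_k$ in $\mathcal{G}$ being latent or endogenous), and one output $Y:=f_y(\mathbf{Pa}_y)$ with values in a Euclidean space $\mathcal{Y}$ (parents endogenous). $\mathcal{G}$ has exactly $K$ sources, one per latent variable, and $Y$ is its only sink. A layer $\ell$ is a minimal subset of endogenous variables such that every directed path from a latent node to $Y$ contains at least one element of $\ell$. Image sets: $\mathcal{Y}_M=\{Y(\bm z):\bm z\in\mathcal{Z}\}$ and, for a set $\mathcal{E}$ of endogenous variables, $\bm{\mathcal{V}}^{\mathcal{E}}_M=\{\bm V_{|\mathcal{E}}(\bm z):\bm z\in\mathcal{Z}\}\subseteq\prod_{k\in\mathcal{E}}\mathcal{V}^k$. The latent mapping is $g_M:\mathcal{Z}\to\mathcal{Y}_M$, $\bm z\mapsto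 Y(\bm z)$, and for a layer $\ell$ the layer mapping is $\tilde g^\ell_M:\bm{\mathcal{V}}^\ell_M\to\mathcal{Y}_M$, $\bm v\mapsto Y(\bm v)$ (output obtained by assigning layer $\ell$ the values $\bm v$ and computing downstream). A continuous injective $f:X\to Y$ with continuous inverse $f^{-1}:f[X]\to X$ is called an embedding. $M$ is embedded if $g_M$ and the $\tilde g^\ell_M$ of all layers $\ell$ are embeddings of $\mathcal{Z}$, resp. $\bm{\mathcal{V}}^\ell_M$, into $\mathcal{Y}$. All spaces carry Euclidean (subspace/product) topologies. *)

From HB Require Import structures.
From mathcomp Require Import all_boot all_order all_algebra.
From mathcomp Require Import all_classical all_reals all_analysis.
Set Implicit Arguments. Unset Strict Implicit. Unset Printing Implicit Defensive.
Import Order.TTheory GRing.Theory Num.Theory.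
Import numFieldNormedType.Exports.
Local Open Scope classical_set_scope.
Local Open Scope ring_scope.

Definition embedding_on {T U : topologicalType} (A : set T) (f : T -> U) : Prop :=
  [/\ {within A, continuous f},
      (forall x y, A x -> A y -> f x = f y -> x = y) &
      exists h : U -> T, {within f @` A, continuous h} /\
                         (forall x, A x -> h (f x) = x)].

Definition Vprod (R : realType) (N : nat) (d : 'I_N -> nat) :=
  prod_topology (fun i : 'I_N => 'rV[R]_(d i)).

(* A causal generative model.
   - latent variables z_k, k : 'I_K, z : 'rV_K, z_k = z ord0 k, with domain Zk k
     (a closed interval of R);
   - endogenous variables V_j, j : 'I_N, with values in R^(d j) = 'rV_(d j);
   - output Y with values in R^dy;
   - DAG: lpar j k  <-> latent z_k is a parent of V_j,
          par i j   <-> V_i is a parent of V_j,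
          ypar j    <-> V_j is a parent of Y;
   - structural equations f j (continuous, depending only on parents) and fy. *)
Record CGM (R : realType) := {
  K : nat;
  N : nat;
  d : 'I_N -> nat;
  dy : nat;
  Zk : 'I_K -> set R;
  Zk_interval : forall k, is_interval (Zk k);
  Zk_closed : forall k, closed (Zk k);
  lpar : 'I_N -> 'I_K -> bool;
  par : rel 'I_N;
  ypar : pred 'I_N;
  par_acyclic : forall i j, par i j -> ~~ connect par j i;
  (* the sources are exactly the latent nodes *)
  endo_not_source : forall j, [exists k, lpar j k] || [exists i, par i j];
  y_not_source : exists j, ypar j;
  (* Y is the only sink *)
  latent_not_sink : forall k, exists j, lpar j k;
  endo_not_sink : forall j, ypar j || [exists i, par j i];
  f : forall j : 'I_N, 'rV[R]_K -> Vprod R d -> 'rV[R]_(d j);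
  fy : Vprod R d -> 'rV[R]_dy;
  f_parents : forall j (z z' : 'rV[R]_K) (V V' : Vprod R d),
      (forall k, lpar j k -> z ord0 k = z' ord0 k) ->
      (forall i, par i j -> V i = V' i) -> f j z V = f j z' V';
  fy_parents : forall V V' : Vprod R d, (forall i, ypar i -> V i = V' i) -> fy V = fy V';
  f_cont : forall j,
      {within [set p : 'rV[R]_K * Vprod R d |
                 forall k, Zk k (p.1 ord0 k)],
       continuous (fun p => f j p.1 p.2)};
  fy_cont : continuous fy
}.

Section CGMdefs.
Context {R : realType} (M : CGM R).

Definition Zset : set 'rV[R]_(K M) := [set z | forall k, Zk k (z ord0 k)].

Definition Vassign := Vprod R (@d R M).

(* values of all endogenous variables for latent z (N rounds of the structural
   equations reach the unique solution since the graph is acyclic) *)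
Definition eval (z : 'rV[R]_(K M)) : Vassign :=
  iter (N M) (fun V j => f j z V) (fun j => 0).

Definition eval_do (l : {set 'I_(N M)}) (v : Vassign) (z : 'rV[R]_(K M)) : Vassign :=
  iter (N M) (fun V j => if j \in l then v j else f j z V) (fun j => 0).

Definition gM (z : 'rV[R]_(K M)) : 'rV[R]_(dy M) := fy (eval z).

(* l cuts every directed path latent -> ... -> Y *)
Definition cut (l : {set 'I_(N M)}) : bool :=
  ~~ [exists k : 'I_(K M), exists j : 'I_(N M), exists j' : 'I_(N M),
      [&& lpar j k, ypar j', j \notin l, j' \notin l &
          connect [rel a b | [&& par a b, a \notin l & b \notin l]] j j']].

Definition layer (l : {set 'I_(N M)}) : bool := minset cut l.

(* a point of prod_{j in l} V^j, represented as an assignment vanishing off l *)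
Definition restr (l : {set 'I_(N M)}) (V : Vassign) : Vassign :=
  fun j => if j \in l then V j else 0.

Definition layer_image (l : {set 'I_(N M)}) : set Vassign :=
  [set restr l (eval z) | z in Zset].

(* layer mapping: assign l the values v and compute downstream; the remaining
   (non-downstream) variables are computed from an arbitrary latent z0, which
   does not affect Y when l is a layer *)
Definition layer_map (l : {set 'I_(N M)}) (z0 : 'rV[R]_(K M)) (v : Vassign)
  : 'rV[R]_(dy M) := fy (eval_do l v z0).

Definition embedded : Prop :=
  embedding_on Zset gM /\
  forall l, layer l -> forall z0, Zset z0 -> embedding_on (layer_image l) (layer_map l z0).

End CGMdefs.

Arguments Zset {R} M _.
Arguments eval {R} M z.
Arguments eval_do {R} M l v z.
Arguments gM {R} M z.
Arguments cut {R} M l.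
Arguments layer {R} M l.
Arguments layer_image {R} M l _.
Arguments layer_map {R} M l z0 v.
Arguments embedded {R} M.

From Pilot Require Import Defs.
From HB Require Import structures.
From mathcomp Require Import all_boot all_order all_algebra.
From mathcomp Require Import all_classical all_reals all_analysis.
Import numFieldNormedType.Exports.
Local Open Scope classical_set_scope.
Local Open Scope ring_scope.

(* A continuous injection from a compact set into a Hausdorff space is a closed
   map onto its image, hence an embedding. The latent map g_M is continuous,
   because the acyclic structural equations are solved by finitely many
   iterations of continuous maps, and it is injective by hypothesis. For a
   layer l, giving l its observational values under z and recomputing
   downstream returns Y(z), since l blocks every path from a latent variable to
   Y; hence the layer map is injective on V^l_M, which is compact as a
   continuous image of Z, and the same argument applies. *)

Lemma within_continuous_comp {X Y Z : topologicalType} (A : set X) (B : set Y)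
    (f : X -> Y) (g : Y -> Z) :
  {homo f : x / A x >-> B x} ->
  {within A, continuous f} -> {within B, continuous g} ->
  {within A, continuous (g \o f)}.
Proof.
move=> fAB cf cg x; apply: continuous_comp (cg (f x)).
exact: (@subspaceT_continuous _ _ _ _ (mkfun_fun fAB) cf).
Qed.

Lemma continuous_prod_topology {X : topologicalType} {I : eqType}
    {T : I -> topologicalType} (g : X -> prod_topology T) :
  (forall i, continuous (fun x => g x i)) -> continuous g.
Proof.
move=> cg x; apply/cvg_sup => i; apply/cvg_image.
  apply/seteqP; split => // y _.
  by exists (dfwith (g x) i y); rewrite ?dfwithin.
move=> B /= Bn; exists ((fun h : prod_topology T => h i) @^-1` B).
  exact: (cg i x B Bn).
apply/seteqP; split => [y [h Bh <-] //|y By].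
by exists (dfwith (g x) i y); rewrite /= dfwithin.
Qed.

Lemma iter_within_continuous {X Y : topologicalType} (A : set X)
    (F : X -> Y -> Y) (y0 : Y) n :
  {within [set p : X * Y | A p.1], continuous (fun p => F p.1 p.2)} ->
  {within A, continuous (fun x => iter n (F x) y0)}.
Proof.
move=> cF; elim: n => [|n IH]; first exact/continuous_subspaceT/cst_continuous.
have cid : {within A, continuous (@id X)}.
  by apply: continuous_subspaceT => ?; exact: cvg_id.
apply: (@within_continuous_comp _ _ _ A [set p : X * Y | A p.1]
  (fun x => (x, iter n (F x) y0)) (fun p => F p.1 p.2)) => // x.
exact: cvg_pair (cid x) (IH x).
Qed.

(* [x0] is only the value of the inverse outside [f @` A]. *)
Lemma compact_injective_embedding {T U : topologicalType} (A : set T)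
    (f : T -> U) (x0 : T) :
  hausdorff_space U -> compact A -> {within A, continuous f} ->
  {in A &, injective f} -> embedding_on A f.
Proof.
move=> hU cA cf finj; split=> // [x y Ax Ay|].
  by apply: finj; rewrite inE.
pose h := 'pinv_(fun=> x0) A f.
have hK x : A x -> h (f x) = x by move=> Ax; apply: pinvKV; rewrite ?inE.
exists h; split=> //.
apply/continuous_closedP => C cC; apply/closed_subspaceP.
exists (f @` (C `&` A)).
  apply: compact_closed hU _; apply: continuous_compact.
    exact: continuous_subspaceW cf.
  by rewrite setIC; apply: compact_closedI.
apply/seteqP; split => y.
  case=> -[x [Cx Ax] <-] _; split; last by exists x.
  by rewrite /from_subspace /= hK.
case=> hy [x Ax fxy]; split; last by exists x.
by exists x => //; split => //; move: hy; rewrite -fxy /from_subspace /= hK.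
Qed.

Section AcyclicIteration.
Context {I : finType} {e : rel I}.
Hypothesis e_acyclic : forall i j, e i j -> ~~ connect e j i.

Definition ancestors (j : I) : {set I} := [set i | connect e i j].

Lemma card_ancestors_gt0 j : (0 < #|ancestors j|)%N.
Proof. by apply/card_gt0P; exists j; rewrite inE connect0. Qed.

Lemma card_ancestors_lt {i j} : e i j -> (#|ancestors i| < #|ancestors j|)%N.
Proof.
move=> eij; apply/proper_card/properP; split.
  apply/fintype.subsetP => x; rewrite !inE => /connect_trans; apply.
  exact: connect1.
by exists j; rewrite !inE ?connect0 // (negbTE (e_acyclic _ _ eij)).
Qed.

Lemma acyclic_ind (P : I -> Prop) :
  (forall j, (forall i, e i j -> P i) -> P j) -> forall j, P j.
Proof.
move=> IH j; have [n] := ubnP #|ancestors j|; elim: n j => // n IHn j jn.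
apply: IH => i eij; apply: IHn; rewrite ltnS in jn.
exact: leq_trans (card_ancestors_lt eij) jn.
Qed.

Context {T : I -> Type} (F : (forall i, T i) -> forall i, T i).
Hypothesis F_local :
  forall V V' j, (forall i, e i j -> V i = V' i) -> F V j = F V' j.

Lemma iter_local_stable x j m n :
  (#|ancestors j| <= m)%N -> (#|ancestors j| <= n)%N ->
  iter m F x j = iter n F x j.
Proof.
elim/acyclic_ind: j m n => j IH [|m] [|n] jm jn //;
  try by [rewrite leqNgt card_ancestors_gt0 in jm
         | rewrite leqNgt card_ancestors_gt0 in jn].
rewrite !iterS; apply: F_local => i eij.
by apply: IH; rewrite // -ltnS; apply: leq_trans (card_ancestors_lt eij) _.
Qed.

Lemma iter_card_fixpoint x j : F (iter #|I| F x) j = iter #|I| F x j.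
Proof.
rewrite -[LHS]/(iter #|I|.+1 F x j).
by apply: iter_local_stable; rewrite ?leqW ?max_card.
Qed.

End AcyclicIteration.

Section CGMEvaluation.
Context {R : realType} (M : CGM R).

Lemma eval_fixpoint z j : Defs.eval M z j = f j z (Defs.eval M z).
Proof.
have F_local V V' i : (forall k, par k i -> V k = V' k) -> f i z V = f i z V'.
  by move=> eqV; apply: f_parents.
have := iter_card_fixpoint (@par_acyclic R M) _ F_local (fun=> 0) j.
by rewrite card_ord.
Qed.

Lemma eval_do_fixpoint l v z j :
  eval_do M l v z j = if j \in l then v j else f j z (eval_do M l v z).
Proof.
pose F (V : Vassign M) i := if i \in l then v i else f i z V.
have F_local V V' i : (forall k, par k i -> V k = V' k) -> F V i = F V' i.
  by move=> eqV; rewrite /F; case: ifP => // _; apply: f_parents.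
have := iter_card_fixpoint (@par_acyclic R M) F F_local (fun=> 0) j.
by rewrite card_ord.
Qed.

Definition avoiding (l : {set 'I_(N M)}) : rel 'I_(N M) :=
  [rel a b | [&& par a b, a \notin l & b \notin l]].

Lemma eval_do_restr_eval_fixpoint (l : {set 'I_(N M)}) z0 z j :
  (j \notin l -> forall k a,
     lpar a k -> a \notin l -> ~~ connect (avoiding l) a j) ->
  eval_do M l (restr l (Defs.eval M z)) z0 j = Defs.eval M z j.
Proof.
elim/(acyclic_ind (@par_acyclic R M)): j => j IH unreached.
rewrite eval_do_fixpoint; case: ifPn => [jl|jl]; first by rewrite /restr jl.
rewrite eval_fixpoint; apply: f_parents => [k ljk|i pij].
  by move: (unreached jl k j ljk jl); rewrite connect0.
apply: IH => // il k a lak al; apply/negP => cai.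
move: (unreached jl k a lak al); rewrite (connect_trans cai) //.
by apply: connect1; apply/and3P.
Qed.

Lemma layer_map_restr_eval l z0 z : Defs.cut M l ->
  layer_map M l z0 (restr l (Defs.eval M z)) = gM M z.
Proof.
move=> /negP lcut; apply: fy_parents => i yi.
apply: eval_do_restr_eval_fixpoint => il k a lak al; apply/negP => cai.
apply: lcut; apply/existsP; exists k; apply/existsP; exists a.
by apply/existsP; exists i; rewrite lak yi al il.
Qed.

Lemma eval_continuous : {within Zset M, continuous (Defs.eval M)}.
Proof.
apply: iter_within_continuous.
exact: (@continuous_prod_topology (subspace _) _ (fun i => 'rV[R]_(d i)))
  (@f_cont R M).
Qed.

Lemma gM_continuous : {within Zset M, continuous (gM M)}.
Proof.
move=> z; apply: (@continuous_comp (subspace (Zset M)) (Vassign M)).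
  exact: eval_continuous.
exact: fy_cont.
Qed.

Lemma layer_map_continuous l z0 : Zset M z0 -> continuous (layer_map M l z0).
Proof.
move=> Zz0.
pose F (v V : Vassign M) : Vassign M :=
  fun i => if i \in l then v i else f i z0 V.
have cF : continuous (fun p : Vassign M * Vassign M => F p.1 p.2).
  apply: (@continuous_prod_topology _ _ (fun i => 'rV[R]_(d i))) => i.
  rewrite /F.
  case: (i \in l).
    move=> p; apply: (@continuous_comp _ _ _ fst (fun v : Vassign M => v i)).
      exact: cvg_fst.
    exact: proj_continuous.
  apply/continuous_subspace_setT.
  apply: (@within_continuous_comp _ _ _ setT [set p | Zset M p.1]
    (fun p => (z0, p.2)) (fun p => f i p.1 p.2)) => //; last exact: f_cont.
  by apply: continuous_subspaceT => p; exact: cvg_pair (cvg_cst z0) cvg_snd.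
have ceval : continuous (fun v => eval_do M l v z0).
  apply/continuous_subspace_setT; apply: iter_within_continuous.
  exact: continuous_subspaceT.
move=> v; apply: (@continuous_comp _ _ _ (fun v => eval_do M l v z0)).
  exact: ceval.
exact: fy_cont.
Qed.

Lemma restr_continuous l : continuous (@restr R M l).
Proof.
apply: (@continuous_prod_topology _ _ (fun i => 'rV[R]_(d i))) => j.
rewrite /restr.
by case: (j \in l); [exact: proj_continuous | exact: cst_continuous].
Qed.

End CGMEvaluation.

Theorem proposition1 (R : realType) (M : CGM R) :
  (forall z z', Zset M z -> Zset M z' -> gM M z = gM M z' -> z = z') ->
  compact (Zset M) ->
  embedded M.
Proof.
move=> ginj cZ.
have hY : hausdorff_space 'rV[R]_(dy M) by apply: norm_hausdorff.
split=> [|l ll z0 Zz0].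
  apply: (compact_injective_embedding _ _ (0 : 'rV[R]_(K M)) hY cZ).
    exact: gM_continuous.
  by move=> z z' /set_mem Zz /set_mem Zz'; apply: ginj.
have lcut : Defs.cut M l := minsetp ll.
apply: (compact_injective_embedding _ _ ((fun=> 0) : Vassign M) hY).
- apply: continuous_compact cZ => z.
  apply: (@continuous_comp (subspace (Zset M)) (Vassign M)).
    exact: eval_continuous.
  exact: restr_continuous.
- exact/continuous_subspaceT/layer_map_continuous.
- move=> _ _ /set_mem[z Zz <-] /set_mem[z' Zz' <-].
  by rewrite !layer_map_restr_eval // => /ginj ->.
Qed.
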